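(* $$\sum_{n=0}^\infty \frac{\binom{2n}{n}}{(n+1)^3\, 2^{2n}} = 8 - 8\log 2 - \frac{\pi^2}{3} + 4(\log 2)^2.$$
   Context: $\binom{2n}{n}$ is the central binomial coefficient; $\log$ is the natural logarithm. *)

From Stdlib Require Import Reals.
From Coquelicot Require Import Coquelicot.

(* With [cbin n = C(2n,n) / 4^n] one has [sum_n cbin n x^n = (1 - x)^(-1/2)].
   Dividing the n-th coefficient by [n + 1] amounts to integrating [x * P(x)], so three
   successive integrations, each checked by differentiating a candidate, give
   [x * sum_n cbin n x^n / (n+1)^3 = F3 (sqrt (1 - x))] with [F3] built from logarithms
   and the dilogarithm [Li2].  All coefficients are nonnegative, so letting [x -> 1]
   (Abel's theorem) yields the sum [F3 0 = 8 - 8 ln 2 - 4 Li2(1/2) + 2 (ln 2)^2].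
   Euler's reflection formula gives [2 Li2(1/2) + (ln 2)^2 = zeta(2)], and
   [zeta(2) = pi^2/6] is proved with Matsuoka's Wallis-integral argument. *)

From Stdlib Require Import Reals Lra Lia Nsatz.
From Coquelicot Require Import Coquelicot.
Open Scope R_scope.

Lemma continuous_of_ex_derive (f : R -> R) x : ex_derive f x -> continuous f x.
Proof. apply (ex_derive_continuous (K := R_AbsRing) (V := R_NormedModule)). Qed.

Lemma eq_of_derive_zero (f : R -> R) x z :
  (forall y, Rmin x z < y < Rmax x z -> is_derive f y 0) ->
  continuous f x -> continuous f z -> f x = f z.
Proof.
  intros Hd Hx Hz.
  destruct (MVT_gen f z x (fun _ => 0)) as [c [_ Hc]]; [| | lra].
  - intros y Hy. apply Hd. rewrite Rmin_comm, Rmax_comm. exact Hy.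
  - intros y Hy. apply continuity_pt_filterlim.
    destruct (Req_dec y x) as [-> | Hyx]; [exact Hx |].
    destruct (Req_dec y z) as [-> | Hyz]; [exact Hz |].
    apply continuous_of_ex_derive. exists 0. apply Hd.
    revert Hy. unfold Rmin, Rmax. destruct Rle_dec, Rle_dec; lra.
Qed.

Lemma continuous_le_at_left (f : R -> R) a d M :
  0 < d -> continuous f a -> (forall x, a - d < x < a -> f x <= M) -> f a <= M.
Proof.
  intros Hd Hc Hf.
  apply (filterlim_le (F := at_left a) f (fun _ => M) (f a) M).
  - exists (mkposreal d Hd). intros x Hx Hxa. apply Hf.
    change (Rabs (x - a) < d) in Hx. apply Rabs_lt_between in Hx. lra.
  - exact (filterlim_filter_le_1 f (filter_le_within _) Hc).
  - apply filterlim_const.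
Qed.

(** * Power series with nonnegative coefficients at [x = 1] *)

Lemma sum_n_le_Series (u : nat -> R) N :
  (forall n, 0 <= u n) -> ex_series u -> sum_n u N <= Series u.
Proof.
  intros Hu Hs. rewrite sum_n_Reals. apply sum_incr; [| exact Hu].
  apply is_series_Reals, Series_correct, Hs.
Qed.

Section NonnegativeSeries.

Variable a : nat -> R.
Hypothesis a_ge0 : forall n, 0 <= a n.
Hypothesis a_summable : ex_series a.

Lemma PSeries_term_bounds x n : 0 <= x <= 1 -> 0 <= a n * x ^ n <= a n.
Proof.
  intros Hx. pose proof (a_ge0 n).
  assert (0 <= x ^ n <= 1).
  { split; [apply pow_le; lra |]. rewrite <- (pow1 n). apply pow_incr. lra. }
  split; nra.
Qed.

Lemma ex_series_PSeries_terms x : 0 <= x <= 1 -> ex_series (fun n => a n * x ^ n).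
Proof.
  intros Hx. apply (ex_series_le (K := R_AbsRing) (V := R_CompleteNormedModule)) with a;
    [| exact a_summable].
  intros n. destruct (PSeries_term_bounds x n Hx).
  change (Rabs (a n * x ^ n) <= a n). rewrite Rabs_pos_eq; lra.
Qed.

Lemma PSeries_le_Series x : 0 <= x <= 1 -> 0 <= PSeries a x <= Series a.
Proof.
  intros Hx. unfold PSeries. split.
  - apply Rle_trans with (sum_n (fun n => a n * x ^ n) 0).
    + rewrite sum_O. apply PSeries_term_bounds, Hx.
    + apply sum_n_le_Series; [intros n; apply PSeries_term_bounds, Hx |].
      apply ex_series_PSeries_terms, Hx.
  - apply Series_le; [intros n; apply PSeries_term_bounds, Hx | exact a_summable].
Qed.

Lemma pow_sum_n_le_PSeries x N : 0 <= x <= 1 -> x ^ N * sum_n a N <= PSeries a x.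
Proof.
  intros Hx. apply Rle_trans with (sum_n (fun n => a n * x ^ n) N).
  - induction N as [| N IH].
    + rewrite !sum_O. simpl. lra.
    + rewrite !sum_Sn. unfold plus. simpl.
      assert (0 <= x ^ N * sum_n a N).
      { apply Rmult_le_pos; [apply pow_le; lra |].
        rewrite sum_n_Reals. apply cond_pos_sum, a_ge0. }
      pose proof (a_ge0 (S N)). nra.
  - apply sum_n_le_Series; [intros n; apply PSeries_term_bounds, Hx |].
    apply ex_series_PSeries_terms, Hx.
Qed.

Lemma Series_le_of_PSeries_le (g : R -> R) :
  continuous g 1 -> (forall x, 0 < x < 1 -> x * PSeries a x <= g x) -> Series a <= g 1.
Proof.
  intros Hg Hle.
  assert (Hpartial : forall N, sum_n a N <= g 1).
  { intros N.
    enough (Hlim : 1 ^ S N * sum_n a N - g 1 <= 0) by (rewrite pow1 in Hlim; lra).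
    apply (continuous_le_at_left (fun x => x ^ S N * sum_n a N - g x) 1 1); [lra | |].
    - apply (continuous_minus (fun x => x ^ S N * sum_n a N)); [| exact Hg].
      apply continuous_of_ex_derive. auto_derive. exact I.
    - intros x Hx. specialize (Hle x ltac:(lra)).
      pose proof (pow_sum_n_le_PSeries x N ltac:(lra)). simpl pow. nra. }
  exact (is_lim_seq_le (sum_n a) (fun _ => g 1) (Series a) (g 1) Hpartial
           (Series_correct _ a_summable) (is_lim_seq_const _)).
Qed.

Lemma le_Series_of_le_PSeries (g : R -> R) :
  continuous g 1 -> (forall x, 0 < x < 1 -> g x <= x * PSeries a x) -> g 1 <= Series a.
Proof.
  intros Hg Hle. apply (continuous_le_at_left g 1 1); [lra | exact Hg |].
  intros x Hx. specialize (Hle x ltac:(lra)).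
  pose proof (PSeries_le_Series x ltac:(lra)). nra.
Qed.

End NonnegativeSeries.

(** * The Basel problem *)

Lemma is_RInt_lin_comb (f g : R -> R) a b A B (al be : R) :
  is_RInt f a b A -> is_RInt g a b B ->
  is_RInt (fun x => al * f x + be * g x) a b (al * A + be * B).
Proof.
  intros HA HB.
  exact (is_RInt_plus _ _ _ _ _ _ (is_RInt_scal _ _ _ al _ HA) (is_RInt_scal _ _ _ be _ HB)).
Qed.

Lemma is_RInt_eq (f : R -> R) a b l l' : is_RInt f a b l -> is_RInt f a b l' -> l = l'.
Proof.
  intros H H'. rewrite <- (is_RInt_unique _ _ _ _ H). exact (is_RInt_unique _ _ _ _ H').
Qed.

Lemma is_RInt_derive_zero (F f : R -> R) a b :
  (forall x, is_derive F x (f x)) -> (forall x, continuous f x) -> F a = F b ->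
  is_RInt f a b 0.
Proof.
  intros HF Hf Hab.
  replace 0 with (minus (F b) (F a)) by (rewrite Hab; unfold minus, plus, opp; simpl; ring).
  apply (is_RInt_derive F); intros x _; [apply HF | apply Hf].
Qed.

Definition wallis_I (k : nat) : R := RInt (fun x => cos x ^ k) 0 (PI / 2).
Definition wallis_J (k : nat) : R := RInt (fun x => x ^ 2 * cos x ^ k) 0 (PI / 2).

Lemma is_RInt_wallis_I k : is_RInt (fun x => cos x ^ k) 0 (PI / 2) (wallis_I k).
Proof.
  apply (RInt_correct (V := R_CompleteNormedModule)),
    (ex_RInt_continuous (V := R_CompleteNormedModule)).
  intros x _. apply continuous_of_ex_derive. auto_derive. exact I.
Qed.

Lemma is_RInt_wallis_J k : is_RInt (fun x => x ^ 2 * cos x ^ k) 0 (PI / 2) (wallis_J k).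
Proof.
  apply (RInt_correct (V := R_CompleteNormedModule)),
    (ex_RInt_continuous (V := R_CompleteNormedModule)).
  intros x _. apply continuous_of_ex_derive. auto_derive. exact I.
Qed.

Lemma wallis_I_rec k : INR (S (S k)) * wallis_I (S (S k)) = INR (S k) * wallis_I k.
Proof.
  enough (INR (S (S k)) * wallis_I (S (S k)) + - INR (S k) * wallis_I k = 0) by lra.
  apply (is_RInt_eq
    (fun x => INR (S (S k)) * cos x ^ S (S k) + - INR (S k) * cos x ^ k) 0 (PI / 2)).
  { apply is_RInt_lin_comb; apply is_RInt_wallis_I. }
  apply (is_RInt_derive_zero (fun x => sin x * cos x ^ S k)).
  - intros x. auto_derive; [exact I |].
    (* [auto_derive] leaves [INR (S k)] unfolded into this [match]. *)
    change (match k with 0%nat => 1 | S _ => INR k + 1 end) with (INR (S k)).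
    pose proof (sin2_cos2 x) as Hsc. unfold Rsqr in Hsc. rewrite !S_INR. simpl pow.
    nsatz.
  - intros x. apply continuous_of_ex_derive. auto_derive. exact I.
  - rewrite cos_PI2, sin_0, pow_i by lia. ring.
Qed.

Lemma wallis_J_rec k m : INR k + 2 = 2 * m ->
  wallis_I (S (S k)) + 2 * m ^ 2 * wallis_J (S (S k)) = m * INR (S k) * wallis_J k.
Proof.
  intros Hm.
  enough (1 * wallis_I (S (S k)) + 1 * (2 * m ^ 2 * wallis_J (S (S k))
            + - (m * INR (S k)) * wallis_J k) = 0) by lra.
  apply (is_RInt_eq (fun x => 1 * cos x ^ S (S k) + 1 * (2 * m ^ 2 * (x ^ 2 * cos x ^ S (S k))
            + - (m * INR (S k)) * (x ^ 2 * cos x ^ k))) 0 (PI / 2)).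
  { apply is_RInt_lin_comb; [apply is_RInt_wallis_I |].
    apply is_RInt_lin_comb; apply is_RInt_wallis_J. }
  apply (is_RInt_derive_zero (fun x => x * cos x ^ S (S k) + m * x ^ 2 * sin x * cos x ^ S k)).
  - intros x. auto_derive; [exact I |].
    change (match k with 0%nat => 1 | S _ => INR k + 1 end) with (INR (S k)).
    pose proof (sin2_cos2 x) as Hsc. unfold Rsqr in Hsc. rewrite !S_INR in *. simpl pow.
    nsatz.
  - intros x. apply continuous_of_ex_derive. auto_derive. exact I.
  - rewrite cos_PI2, sin_0, !(pow_i (S _)) by lia. ring.
Qed.

Lemma wallis_I_0 : wallis_I 0 = PI / 2.
Proof.
  unfold wallis_I. simpl pow. rewrite RInt_const. unfold scal; simpl. unfold mult; simpl. lra.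
Qed.

Lemma wallis_J_0 : wallis_J 0 = (PI / 2) ^ 3 / 3.
Proof.
  apply (is_RInt_eq (fun x => x ^ 2 * cos x ^ 0) 0 (PI / 2)); [apply is_RInt_wallis_J |].
  replace ((PI / 2) ^ 3 / 3) with (minus ((PI / 2) ^ 3 / 3) (0 ^ 3 / 3))
    by (unfold minus, plus, opp; simpl; field).
  apply (is_RInt_derive (fun x => x ^ 3 / 3)); intros x _.
  - auto_derive; [exact I | simpl; field].
  - apply continuous_of_ex_derive. auto_derive. exact I.
Qed.

Lemma wallis_I_even_pos n : 0 < wallis_I (2 * n).
Proof.
  induction n as [| n IH].
  - change (2 * 0)%nat with 0%nat. rewrite wallis_I_0. pose proof PI_RGT_0. lra.
  - replace (2 * S n)%nat with (S (S (2 * n))) by lia.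
    pose proof (wallis_I_rec (2 * n)) as W. rewrite !S_INR in W.
    pose proof (pos_INR (2 * n)). nra.
Qed.

Lemma xcos_le_sin x : 0 <= x <= PI / 2 -> x * cos x <= sin x.
Proof.
  intros Hx. pose proof PI_RGT_0.
  destruct (MVT_gen (fun t => sin t - t * cos t) 0 x (fun t => t * sin t)) as [c [Hc E]].
  - intros y _. auto_derive; [exact I | ring].
  - intros y _. apply continuity_pt_filterlim.
    apply (continuous_of_ex_derive (fun t => sin t - t * cos t)). auto_derive. exact I.
  - rewrite Rmin_left in Hc by lra. rewrite Rmax_right in Hc by lra.
    rewrite sin_0, cos_0 in E.
    assert (0 <= sin c) by (apply sin_ge_0; lra).
    assert (0 <= c * sin c * (x - 0)) by (apply Rmult_le_pos; [apply Rmult_le_pos |]; lra).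
    lra.
Qed.

Lemma wallis_J_ge_0 k : 0 <= wallis_J k.
Proof.
  pose proof PI_RGT_0. apply RInt_ge_0; [lra | eexists; apply is_RInt_wallis_J |].
  intros x Hx. apply Rmult_le_pos; [nra |]. apply pow_le, Rlt_le, cos_gt_0; lra.
Qed.

Lemma wallis_J_le k : wallis_J (S (S k)) <= wallis_I k - wallis_I (S (S k)).
Proof.
  pose proof PI_RGT_0.
  pose proof (is_RInt_lin_comb _ _ _ _ _ _ 1 (-1)
    (is_RInt_wallis_I k) (is_RInt_wallis_I (S (S k)))) as E.
  replace (wallis_I k - wallis_I (S (S k)))
    with (1 * wallis_I k + -1 * wallis_I (S (S k))) by ring.
  rewrite <- (is_RInt_unique _ _ _ _ E), <- (is_RInt_unique _ _ _ _ (is_RInt_wallis_J _)).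
  apply RInt_le; [lra | eexists; apply is_RInt_wallis_J | eexists; exact E |].
  intros x Hx. assert (Hc : 0 < cos x) by (apply cos_gt_0; lra).
  assert (0 <= cos x ^ k) by (apply pow_le; lra).
  pose proof (xcos_le_sin x ltac:(lra)).
  pose proof (sin2_cos2 x) as Hsc. unfold Rsqr in Hsc.
  assert (0 <= x * cos x) by (apply Rmult_le_pos; lra).
  assert (x ^ 2 * (cos x * cos x) <= sin x * sin x) by nra.
  simpl pow. nra.
Qed.

Definition wallis_ratio (n : nat) : R := wallis_J (2 * n) / wallis_I (2 * n).

Lemma wallis_ratio_step n : / (INR n + 1) ^ 2 = 2 * (wallis_ratio n - wallis_ratio (S n)).
Proof.
  unfold wallis_ratio. replace (2 * S n)%nat with (S (S (2 * n))) by lia.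
  pose proof (wallis_I_even_pos n) as HI. pose proof (wallis_I_even_pos (S n)) as HI'.
  replace (2 * S n)%nat with (S (S (2 * n))) in HI' by lia.
  pose proof (wallis_I_rec (2 * n)) as W.
  pose proof (wallis_J_rec (2 * n) (INR n + 1)) as M.
  rewrite !S_INR in W. rewrite S_INR in M. rewrite !mult_INR in W, M. simpl (INR 2) in W, M.
  specialize (M ltac:(ring)). pose proof (pos_INR n) as Hn.
  revert HI HI' W M Hn. generalize (wallis_I (2 * n)) (wallis_I (S (S (2 * n))))
    (wallis_J (2 * n)) (wallis_J (S (S (2 * n)))) (INR n).
  intros I I' J J' x HI HI' W M Hn.
  replace I with ((2 * x + 2) * I' / (2 * x + 1)) by (field_simplify_eq; lra).
  replace J with ((I' + 2 * (x + 1) ^ 2 * J') / ((x + 1) * (2 * x + 1)))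
    by (field_simplify_eq; lra).
  field. lra.
Qed.

Lemma wallis_ratio_0 : wallis_ratio 0 = PI ^ 2 / 12.
Proof.
  unfold wallis_ratio. change (2 * 0)%nat with 0%nat.
  rewrite wallis_J_0, wallis_I_0. pose proof PI_RGT_0. field. lra.
Qed.

Lemma wallis_ratio_bounds N : 0 <= wallis_ratio (S N) <= / (2 * INR N + 1).
Proof.
  unfold wallis_ratio. replace (2 * S N)%nat with (S (S (2 * N))) by lia.
  pose proof (wallis_I_even_pos N) as HI. pose proof (wallis_I_even_pos (S N)) as HI'.
  replace (2 * S N)%nat with (S (S (2 * N))) in HI' by lia.
  pose proof (wallis_I_rec (2 * N)) as W. rewrite !S_INR in W. rewrite mult_INR in W.
  pose proof (wallis_J_le (2 * N)) as JL. pose proof (wallis_J_ge_0 (S (S (2 * N)))) as JG.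
  pose proof (pos_INR N) as HN.
  revert HI HI' W JL JG HN. generalize (wallis_I (2 * N)) (wallis_I (S (S (2 * N))))
    (wallis_J (S (S (2 * N)))) (INR N).
  intros I I' J' x HI HI' W JL JG HN. simpl (INR 2) in W.
  split; [apply Rdiv_le_0_compat; lra |].
  apply Rle_trans with ((I - I') / I').
  { apply Rmult_le_compat_r; [left; apply Rinv_0_lt_compat |]; lra. }
  right. replace I with ((2 * x + 2) * I' / (2 * x + 1)) by (field_simplify_eq; lra).
  field. lra.
Qed.

Lemma sum_n_inv_sq N :
  sum_n (fun k => / (INR k + 1) ^ 2) N = PI ^ 2 / 6 - 2 * wallis_ratio (S N).
Proof.
  induction N as [| N IH].
  - rewrite sum_O, wallis_ratio_step, wallis_ratio_0. lra.
  - rewrite sum_Sn, IH, (wallis_ratio_step (S N)). unfold plus. simpl. ring.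
Qed.

Lemma is_series_Basel : is_series (fun n => / (INR n + 1) ^ 2) (PI ^ 2 / 6).
Proof.
  enough (L : is_lim_seq (sum_n (fun n => / (INR n + 1) ^ 2)) (PI ^ 2 / 6)) by exact L.
  apply (is_lim_seq_le_le (fun N => PI ^ 2 / 6 - 2 * / (2 * INR N + 1)) _
    (fun _ => PI ^ 2 / 6)).
  - intros N. rewrite sum_n_inv_sq. pose proof (wallis_ratio_bounds N). lra.
  - replace (Finite (PI ^ 2 / 6)) with (Finite (PI ^ 2 / 6 - 2 * 0)) by (f_equal; ring).
    apply is_lim_seq_minus'; [apply is_lim_seq_const |].
    apply (is_lim_seq_scal_l _ 2 0).
    replace (Finite 0) with (Rbar_inv p_infty) by reflexivity.
    apply is_lim_seq_inv; [| discriminate].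
    apply is_lim_seq_le_p_loc with INR; [| apply is_lim_seq_INR].
    exists 0%nat. intros n _. pose proof (pos_INR n). lra.
  - apply is_lim_seq_const.
Qed.

(** * Generating functions of the central binomial coefficients *)

Definition PS_div_pow (k : nat) (a : nat -> R) (n : nat) : R := a n / (INR n + 1) ^ k.

Lemma CV_radius_ge_1 (a : nat -> R) :
  (forall n, Rabs (a n) <= 1) -> forall x, Rabs x < 1 -> Rbar_lt (Rabs x) (CV_radius a).
Proof.
  intros Ha x Hx. destruct (CV_radius_bounded a) as [Hub _].
  assert (H1 : Rbar_le 1 (CV_radius a)).
  { apply Hub. exists 1. intros n. rewrite pow1, Rmult_1_r. apply Ha. }
  destruct (CV_radius a) as [r | |]; simpl in *; lra || trivial.
Qed.

Lemma PS_div_pow_bounded k a :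
  (forall n, Rabs (a n) <= 1) -> forall n, Rabs (PS_div_pow k a n) <= 1.
Proof.
  intros Ha n. unfold PS_div_pow.
  assert (1 <= (INR n + 1) ^ k) by (apply pow_R1_Rle; pose proof (pos_INR n); lra).
  rewrite Rabs_div, (Rabs_pos_eq ((INR n + 1) ^ k)) by lra.
  apply Rle_div_l; [lra |]. pose proof (Ha n). lra.
Qed.

Lemma PS_div_pow_nonneg k a n : (forall n, 0 <= a n) -> 0 <= PS_div_pow k a n.
Proof.
  intros Ha. unfold PS_div_pow. apply Rdiv_le_0_compat; [apply Ha |].
  apply pow_lt. pose proof (pos_INR n). lra.
Qed.

Lemma Rabs_PS_div_pow_S_le k a n : (forall n, Rabs (a n) <= 1) ->
  Rabs (PS_div_pow (S k) a n) <= PS_div_pow k (fun _ => 1) n.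
Proof.
  intros Ha.
  replace (PS_div_pow (S k) a n) with (PS_div_pow 1 a n * PS_div_pow k (fun _ => 1) n)
    by (unfold PS_div_pow; simpl; pose proof (pos_INR n);
        field; split; [apply pow_nonzero |]; lra).
  pose proof (PS_div_pow_nonneg k (fun _ => 1) n ltac:(intros; lra)).
  rewrite Rabs_mult, (Rabs_pos_eq (PS_div_pow k _ n)) by lra.
  pose proof (PS_div_pow_bounded 1 a Ha n). nra.
Qed.

Lemma is_series_PS_div_pow_2_one : is_series (PS_div_pow 2 (fun _ => 1)) (PI ^ 2 / 6).
Proof.
  apply (is_series_ext (fun n => / (INR n + 1) ^ 2)); [| exact is_series_Basel].
  intros n. change (/ (INR n + 1) ^ 2 = 1 / (INR n + 1) ^ 2). unfold Rdiv. ring.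
Qed.

Lemma PSeries_div_pow_0 a x : PSeries (PS_div_pow 0 a) x = PSeries a x.
Proof. apply PSeries_ext. intros n. unfold PS_div_pow. simpl. field. Qed.

Lemma is_derive_mul_PSeries_div_pow k a x :
  (forall n, Rabs (a n) <= 1) -> Rabs x < 1 ->
  is_derive (fun y => y * PSeries (PS_div_pow (S k) a) y) x (PSeries (PS_div_pow k a) x).
Proof.
  intros Ha Hx.
  apply is_derive_ext with (PSeries (PS_incr_1 (PS_div_pow (S k) a))).
  { intros y. apply PSeries_incr_1. }
  rewrite <- (PSeries_ext (PS_derive (PS_incr_1 (PS_div_pow (S k) a)))).
  - apply is_derive_PSeries. rewrite CV_radius_incr_1.
    apply CV_radius_ge_1; [apply PS_div_pow_bounded, Ha | exact Hx].
  - intros n. unfold PS_derive, PS_div_pow. simpl PS_incr_1. rewrite S_INR. simpl pow.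
    pose proof (pos_INR n). field. split; [apply pow_nonzero |]; lra.
Qed.

Lemma PSeries_div_pow_S_primitive k a (G : R -> R) :
  (forall n, Rabs (a n) <= 1) -> continuous G 0 -> G 0 = 0 ->
  (forall y, 0 < y < 1 -> is_derive G y (PSeries (PS_div_pow k a) y)) ->
  forall x, 0 <= x < 1 -> x * PSeries (PS_div_pow (S k) a) x = G x.
Proof.
  intros Ha HG0 HG00 HG x Hx.
  set (P := fun y => y * PSeries (PS_div_pow (S k) a) y).
  assert (HP : forall y, Rabs y < 1 -> is_derive P y (PSeries (PS_div_pow k a) y))
    by (intros y; apply is_derive_mul_PSeries_div_pow, Ha).
  assert (HPc : forall y, Rabs y < 1 -> continuous P y)
    by (intros y Hy; apply continuous_of_ex_derive; eexists; apply HP, Hy).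
  enough (P x - G x = P 0 - G 0) by (unfold P in *; lra).
  destruct (Req_dec x 0) as [-> | Hx0]; [reflexivity |].
  apply (eq_of_derive_zero (fun y => P y - G y)).
  - intros y Hy. rewrite Rmin_right, Rmax_left in Hy by lra.
    replace 0 with (minus (PSeries (PS_div_pow k a) y) (PSeries (PS_div_pow k a) y))
      by (unfold minus, plus, opp; simpl; ring).
    apply (is_derive_minus P G); [apply HP, Rabs_def1 | apply HG]; lra.
  - apply (continuous_minus P G); [apply HPc, Rabs_def1; lra |].
    apply continuous_of_ex_derive. eexists. apply HG. lra.
  - apply (continuous_minus P G); [apply HPc; rewrite Rabs_R0; lra | exact HG0].
Qed.

Definition cbin (n : nat) : R := Binomial.C (2 * n) n / 2 ^ (2 * n).

Lemma cbin_0 : cbin 0 = 1.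
Proof. unfold cbin, Binomial.C. simpl. lra. Qed.

Lemma cbin_S n : cbin (S n) = cbin n * (2 * INR n + 1) / (2 * INR n + 2).
Proof.
  unfold cbin, Binomial.C.
  replace (2 * S n)%nat with (S (S (2 * n))) by lia.
  replace (S (S (2 * n)) - S n)%nat with (S n) by lia.
  replace (2 * n - n)%nat with n by lia.
  rewrite !fact_simpl, !mult_INR, !S_INR, mult_INR. simpl (INR 2).
  replace (S (S (2 * n))) with (2 + 2 * n)%nat by lia. rewrite pow_add.
  pose proof (INR_fact_lt_0 n). pose proof (INR_fact_lt_0 (2 * n)).
  pose proof (pow_lt 2 (2 * n) ltac:(lra)). pose proof (pos_INR n).
  field. repeat split; lra.
Qed.

Lemma cbin_bounds n : 0 < cbin n <= 1.
Proof.
  induction n as [| n IH]; [rewrite cbin_0; lra |].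
  rewrite cbin_S. pose proof (pos_INR n).
  assert (0 < (2 * INR n + 1) / (2 * INR n + 2) <= 1)
    by (split; [apply Rdiv_lt_0_compat | apply Rle_div_l]; lra).
  unfold Rdiv in *. rewrite Rmult_assoc. nra.
Qed.

Lemma Rabs_cbin_le_1 n : Rabs (cbin n) <= 1.
Proof. pose proof (cbin_bounds n). rewrite Rabs_pos_eq; lra. Qed.

Lemma CV_radius_cbin x : Rabs x < 1 -> Rbar_lt (Rabs x) (CV_radius cbin).
Proof. apply CV_radius_ge_1, Rabs_cbin_le_1. Qed.

(* [(n + 1) cbin (n + 1) = n cbin n + cbin n / 2], i.e. [P' = x P' + P / 2]. *)
Lemma PSeries_cbin_ode x : Rabs x < 1 ->
  2 * (1 - x) * PSeries (PS_derive cbin) x = PSeries cbin x.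
Proof.
  intros Hx.
  set (e := fun n => INR n * cbin n).
  assert (He : forall n, PS_incr_1 (PS_derive cbin) n = e n).
  { intros [| n]; unfold e; simpl; [unfold zero; simpl; ring | reflexivity]. }
  assert (Hd : forall n, PS_derive cbin n = PS_plus e (PS_scal (/ 2) cbin) n).
  { intros n. unfold PS_derive, PS_plus, PS_scal, e. rewrite cbin_S, S_INR.
    unfold plus, scal; simpl. unfold mult; simpl.
    pose proof (pos_INR n). field. lra. }
  assert (Ee : ex_pseries e x).
  { apply CV_radius_inside. rewrite <- (CV_radius_ext _ _ He).
    rewrite CV_radius_incr_1, CV_radius_derive. apply CV_radius_cbin, Hx. }
  assert (Eb : ex_pseries (PS_scal (/ 2) cbin) x).
  { apply CV_radius_inside. rewrite CV_radius_scal by lra. apply CV_radius_cbin, Hx. }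
  assert (E1 : x * PSeries (PS_derive cbin) x = PSeries e x)
    by (rewrite <- PSeries_incr_1; apply PSeries_ext, He).
  assert (E2 : PSeries (PS_derive cbin) x = PSeries e x + / 2 * PSeries cbin x)
    by (rewrite (PSeries_ext _ _ x Hd), PSeries_plus, PSeries_scal by assumption; reflexivity).
  replace (2 * (1 - x) * PSeries (PS_derive cbin) x)
    with (2 * PSeries (PS_derive cbin) x - 2 * (x * PSeries (PS_derive cbin) x)) by ring.
  rewrite E1, E2. field.
Qed.

Lemma PSeries_cbin x : 0 <= x < 1 -> PSeries cbin x = / sqrt (1 - x).
Proof.
  intros Hx.
  set (f := fun y => PSeries cbin y * sqrt (1 - y)).
  assert (Hf : forall y, Rabs y < 1 -> ex_derive f y).
  { intros y Hy. apply Rabs_def2 in Hy. unfold f. auto_derive.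
    split; [apply ex_derive_PSeries, CV_radius_cbin, Rabs_def1 |]; lra. }
  assert (E : f x = f 0).
  { apply eq_of_derive_zero.
    - intros y Hy. rewrite Rmin_right, Rmax_left in Hy by lra.
      assert (Hy1 : Rabs y < 1) by (apply Rabs_def1; lra).
      assert (Hs : 0 < sqrt (1 - y)) by (apply sqrt_lt_R0; lra).
      assert (Hs2 : sqrt (1 - y) * sqrt (1 - y) = 1 - y) by (apply sqrt_sqrt; lra).
      unfold f. auto_derive; [split; [apply ex_derive_PSeries, CV_radius_cbin, Hy1 |]; lra |].
      rewrite Derive_PSeries by apply CV_radius_cbin, Hy1.
      rewrite <- (PSeries_cbin_ode y Hy1). replace (1 + - y) with (1 - y) by ring.
      revert Hs Hs2. generalize (sqrt (1 - y)). intros u Hu Hu2.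
      rewrite <- Hu2. field. lra.
    - apply continuous_of_ex_derive, Hf, Rabs_def1; lra.
    - apply continuous_of_ex_derive, Hf. rewrite Rabs_R0. lra. }
  unfold f in E. rewrite PSeries_0, cbin_0, Rminus_0_r, sqrt_1, Rmult_1_r in E.
  assert (0 < sqrt (1 - x)) by (apply sqrt_lt_R0; lra).
  apply Rmult_eq_reg_r with (sqrt (1 - x)); [rewrite E, Rinv_l |]; lra.
Qed.

Lemma PSeries_cbin_div_1 x : 0 <= x < 1 ->
  x * PSeries (PS_div_pow 1 cbin) x = 2 - 2 * sqrt (1 - x).
Proof.
  apply (PSeries_div_pow_S_primitive 0 cbin (fun x => 2 - 2 * sqrt (1 - x)) Rabs_cbin_le_1).
  - apply continuous_of_ex_derive. auto_derive. lra.
  - rewrite Rminus_0_r, sqrt_1. ring.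
  - intros y Hy. rewrite PSeries_div_pow_0, PSeries_cbin by lra.
    auto_derive; [lra |].
    replace (1 + - y) with (1 - y) by ring.
    assert (0 < sqrt (1 - y)) by (apply sqrt_lt_R0; lra).
    field. lra.
Qed.

Lemma PSeries_cbin_div_2 x : 0 <= x < 1 ->
  x * PSeries (PS_div_pow 2 cbin) x = 4 * (1 - sqrt (1 - x) + ln ((1 + sqrt (1 - x)) / 2)).
Proof.
  apply (PSeries_div_pow_S_primitive 1 cbin
    (fun x => 4 * (1 - sqrt (1 - x) + ln ((1 + sqrt (1 - x)) / 2))) Rabs_cbin_le_1).
  - apply continuous_of_ex_derive. auto_derive.
    pose proof (sqrt_pos (1 + - 0)). lra.
  - rewrite Rminus_0_r, sqrt_1. replace ((1 + 1) / 2) with 1 by field. rewrite ln_1. ring.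
  - intros y Hy.
    assert (Hu : 0 < sqrt (1 - y)) by (apply sqrt_lt_R0; lra).
    assert (Hu2 : sqrt (1 - y) * sqrt (1 - y) = 1 - y) by (apply sqrt_sqrt; lra).
    replace (PSeries (PS_div_pow 1 cbin) y) with ((2 - 2 * sqrt (1 - y)) / y)
      by (rewrite <- PSeries_cbin_div_1 by lra; field; lra).
    auto_derive; replace (1 + - y) with (1 - y) by ring; [lra |].
    revert Hu Hu2. generalize (sqrt (1 - y)). intros u Hu Hu2.
    replace y with (1 - u * u) by lra. field. nra.
Qed.

(** * The dilogarithm *)

Lemma PSeries_div_pow_1_one x : 0 <= x < 1 ->
  x * PSeries (PS_div_pow 1 (fun _ => 1)) x = - ln (1 - x).
Proof.
  apply (PSeries_div_pow_S_primitive 0 _ (fun x => - ln (1 - x))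
    (fun _ => Req_le _ _ Rabs_R1)).
  - apply continuous_of_ex_derive. auto_derive. lra.
  - rewrite Rminus_0_r, ln_1. ring.
  - intros y Hy. rewrite PSeries_div_pow_0.
    replace (PSeries (fun _ => 1) y) with (/ (1 - y)).
    + auto_derive; [lra | field; lra].
    + symmetry. apply is_pseries_unique.
      apply (is_series_ext (fun n => y ^ n)); [| apply is_series_geom, Rabs_def1; lra].
      intros n. unfold scal; simpl. unfold mult; simpl. rewrite Rmult_1_r. apply pow_n_pow.
Qed.

Definition Li2 (w : R) : R := w * PSeries (PS_div_pow 2 (fun _ => 1)) w.

Lemma is_derive_Li2 w : Rabs w < 1 -> is_derive Li2 w (PSeries (PS_div_pow 1 (fun _ => 1)) w).
Proof. apply is_derive_mul_PSeries_div_pow. intros. apply Req_le, Rabs_R1. Qed.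

Lemma ex_derive_Li2 w : Rabs w < 1 -> ex_derive Li2 w.
Proof. intros Hw. eexists. apply is_derive_Li2, Hw. Qed.

Lemma Derive_Li2 w : 0 < w < 1 -> Derive Li2 w = - ln (1 - w) / w.
Proof.
  intros Hw. rewrite (is_derive_unique _ _ _ (is_derive_Li2 w ltac:(apply Rabs_def1; lra))).
  rewrite <- PSeries_div_pow_1_one by lra. field. lra.
Qed.

Definition F3 (u : R) : R :=
  8 * (1 - u) + 8 * ln ((1 + u) / 2) - 4 * Li2 ((1 - u) / 2) + 2 * ln ((1 + u) / 2) ^ 2.

Lemma ex_derive_F3 u : -1 < u < 3 -> ex_derive F3 u.
Proof.
  intros Hu. unfold F3. auto_derive. repeat split; try lra.
  apply ex_derive_Li2, Rabs_def1; lra.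
Qed.

Lemma PSeries_cbin_div_3 x : 0 <= x < 1 ->
  x * PSeries (PS_div_pow 3 cbin) x = F3 (sqrt (1 - x)).
Proof.
  apply (PSeries_div_pow_S_primitive 2 cbin (fun x => F3 (sqrt (1 - x))) Rabs_cbin_le_1).
  - apply continuous_of_ex_derive. auto_derive.
    replace (1 + - 0) with 1 by ring. rewrite sqrt_1.
    split; [apply ex_derive_F3; lra | split; [lra | exact I]].
  - rewrite Rminus_0_r, sqrt_1. unfold F3, Li2.
    replace ((1 + 1) / 2) with 1 by field. replace ((1 - 1) / 2) with 0 by field.
    rewrite ln_1. ring.
  - intros y Hy.
    assert (Hu : 0 < sqrt (1 - y)) by (apply sqrt_lt_R0; lra).
    assert (Hu2 : sqrt (1 - y) * sqrt (1 - y) = 1 - y) by (apply sqrt_sqrt; lra).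
    assert (Hu1 : sqrt (1 - y) < 1) by nra.
    replace (PSeries (PS_div_pow 2 cbin) y)
      with (4 * (1 - sqrt (1 - y) + ln ((1 + sqrt (1 - y)) / 2)) / y)
      by (rewrite <- PSeries_cbin_div_2 by lra; field; lra).
    unfold F3. auto_derive.
    + replace (1 + - y) with (1 - y) by ring. repeat split; try lra.
      apply ex_derive_Li2, Rabs_def1; lra.
    + replace (1 + - y) with (1 - y) by ring.
      rewrite Derive_Li2 by lra.
      replace (1 - (1 + - sqrt (1 - y)) * / 2) with ((1 + sqrt (1 - y)) / 2) by field.
      unfold Rdiv. generalize (ln ((1 + sqrt (1 - y)) * / 2)). intros L.
      revert Hu Hu2 Hu1. generalize (sqrt (1 - y)). intros u Hu Hu2 Hu1.
      replace y with (1 - u * u) by lra. field. lra.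
Qed.

Lemma is_series_cbin_div_3 : is_series (PS_div_pow 3 cbin) (F3 0).
Proof.
  assert (Hnn : forall n, 0 <= PS_div_pow 3 cbin n)
    by (intros n; apply PS_div_pow_nonneg; intros m; apply Rlt_le, cbin_bounds).
  assert (Hex : ex_series (PS_div_pow 3 cbin)).
  { apply (ex_series_le (K := R_AbsRing) (V := R_CompleteNormedModule))
      with (PS_div_pow 2 (fun _ => 1));
      [| eexists; apply is_series_PS_div_pow_2_one].
    intros n. apply Rabs_PS_div_pow_S_le, Rabs_cbin_le_1. }
  set (g := fun x => F3 (sqrt (1 - x))).
  assert (Hg : continuous g 1).
  { apply (continuous_comp (fun x => sqrt (1 - x)) F3).
    - apply continuous_sqrt_comp, continuous_of_ex_derive. auto_derive. exact I.
    - rewrite Rminus_eq_0, sqrt_0. apply continuous_of_ex_derive, ex_derive_F3. lra. }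
  replace (F3 0) with (g 1) by (unfold g; rewrite Rminus_eq_0, sqrt_0; reflexivity).
  replace (g 1) with (Series (PS_div_pow 3 cbin)); [apply Series_correct, Hex |].
  apply Rle_antisym.
  - apply (Series_le_of_PSeries_le _ Hnn Hex g Hg).
    intros x Hx. unfold g. rewrite PSeries_cbin_div_3 by lra. lra.
  - apply (le_Series_of_le_PSeries _ Hnn Hex g Hg).
    intros x Hx. unfold g. rewrite PSeries_cbin_div_3 by lra. lra.
Qed.

Lemma Li2_bounds w : 0 <= w <= 1 -> 0 <= Li2 w <= w * (PI ^ 2 / 6).
Proof.
  intros Hw. unfold Li2.
  rewrite <- (is_series_unique _ _ is_series_PS_div_pow_2_one).
  pose proof (PSeries_le_Series (PS_div_pow 2 (fun _ => 1))
    (fun n => PS_div_pow_nonneg 2 _ n (fun _ => Rle_0_1))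
    (ex_intro _ _ is_series_PS_div_pow_2_one) w Hw).
  split; [apply Rmult_le_pos |]; nra.
Qed.

Lemma ln_le_sub_1 y : 0 < y -> ln y <= y - 1.
Proof.
  intros Hy. pose proof (exp_ineq1_le (ln y)) as Hexp. rewrite exp_ln in Hexp by lra. lra.
Qed.

Lemma ln_mul_ln_le w : 0 < w < 1 -> ln w * ln (1 - w) <= 2 * sqrt (1 - w) / w.
Proof.
  intros Hw.
  assert (Hs : 0 < sqrt (1 - w)) by (apply sqrt_lt_R0; lra).
  assert (Hs2 : sqrt (1 - w) * sqrt (1 - w) = 1 - w) by (apply sqrt_sqrt; lra).
  assert (Hl1 : ln w < 0) by (rewrite <- ln_1; apply ln_increasing; lra).
  assert (Hl2 : ln (1 - w) < 0) by (rewrite <- ln_1; apply ln_increasing; lra).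
  assert (H1 : - ln w <= (1 - w) / w).
  { rewrite <- ln_Rinv by lra. replace ((1 - w) / w) with (/ w - 1) by (field; lra).
    apply ln_le_sub_1, Rinv_0_lt_compat. lra. }
  assert (H2 : - ln (1 - w) <= 2 / sqrt (1 - w)).
  { replace (ln (1 - w)) with (2 * ln (sqrt (1 - w)))
      by (rewrite <- Hs2 at 2; rewrite ln_mult; lra).
    pose proof (ln_le_sub_1 (/ sqrt (1 - w)) (Rinv_0_lt_compat _ Hs)) as Hinv.
    rewrite ln_Rinv in Hinv by lra. unfold Rdiv. lra. }
  replace (2 * sqrt (1 - w) / w) with ((1 - w) / w * (2 / sqrt (1 - w)))
    by (rewrite <- Hs2 at 1; field; lra).
  replace (ln w * ln (1 - w)) with ((- ln w) * (- ln (1 - w))) by ring.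
  apply Rmult_le_compat; lra.
Qed.

Lemma Li2_reflection w : 0 < w < 1 ->
  Li2 w + Li2 (1 - w) + ln w * ln (1 - w) = 2 * Li2 (1 / 2) + ln 2 ^ 2.
Proof.
  set (Phi := fun z => Li2 z + Li2 (1 - z) + ln z * ln (1 - z)).
  assert (HPhi : forall z, 0 < z < 1 -> is_derive Phi z 0).
  { intros z Hz. unfold Phi.
    auto_derive; [repeat split; try lra; apply ex_derive_Li2, Rabs_def1; lra |].
    rewrite !Derive_Li2 by lra. replace (1 - (1 + - z)) with z by ring.
    replace (1 + - z) with (1 - z) by ring. field. lra. }
  intros Hw.
  replace (2 * Li2 (1 / 2) + ln 2 ^ 2) with (Phi (1 / 2))
    by (unfold Phi; replace (1 - 1 / 2) with (1 / 2) by field;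
        rewrite ln_div, ln_1 by lra; ring).
  change (Phi w = Phi (1 / 2)). apply eq_of_derive_zero.
  - intros y Hy. apply HPhi. revert Hy. unfold Rmin, Rmax. destruct Rle_dec; lra.
  - apply continuous_of_ex_derive. eexists. apply HPhi, Hw.
  - apply continuous_of_ex_derive. eexists. apply HPhi. lra.
Qed.

Lemma Li2_half : 2 * Li2 (1 / 2) + ln 2 ^ 2 = PI ^ 2 / 6.
Proof.
  set (c := 2 * Li2 (1 / 2) + ln 2 ^ 2).
  set (a := PS_div_pow 2 (fun _ => 1)).
  assert (Ha : forall n, 0 <= a n) by (intros n; apply PS_div_pow_nonneg; intros; lra).
  assert (Hex : ex_series a) by (eexists; apply is_series_PS_div_pow_2_one).
  rewrite <- (is_series_unique _ _ is_series_PS_div_pow_2_one). fold a.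
  apply Rle_antisym.
  - (* By the reflection formula [c - Li2 x = Li2 (1 - x) + ln x ln (1 - x)], which is
       at most the correction terms of [g]; these vanish at [x = 1]. *)
    set (g := fun x => c - (1 - x) * (PI ^ 2 / 6) - 2 * sqrt (1 - x) / x).
    replace c with (g 1) by (unfold g; rewrite Rminus_eq_0, sqrt_0; field).
    apply (le_Series_of_le_PSeries a Ha Hex g).
    + apply (continuous_minus (fun x => c - (1 - x) * (PI ^ 2 / 6))
        (fun x => 2 * sqrt (1 - x) / x));
        [apply continuous_of_ex_derive; auto_derive; exact I |].
      apply (continuous_mult (fun x => 2 * sqrt (1 - x)) (fun x => / x)).
      * apply (continuous_mult (fun _ => 2) (fun x => sqrt (1 - x)));
          [apply continuous_const |].
        apply continuous_sqrt_comp, continuous_of_ex_derive. auto_derive. exact I.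
      * apply continuous_of_ex_derive. auto_derive. lra.
    + intros x Hx. unfold g, c. rewrite <- (Li2_reflection x Hx).
      pose proof (Li2_bounds (1 - x) ltac:(lra)). pose proof (ln_mul_ln_le x Hx).
      unfold Li2 at 1. fold a. lra.
  - apply (Series_le_of_PSeries_le a Ha Hex (fun _ => c) (continuous_const _ _)).
    intros x Hx. unfold c. rewrite <- (Li2_reflection x Hx).
    pose proof (Li2_bounds (1 - x) ltac:(lra)).
    assert (ln x < 0) by (rewrite <- ln_1; apply ln_increasing; lra).
    assert (ln (1 - x) < 0) by (rewrite <- ln_1; apply ln_increasing; lra).
    unfold Li2 at 1. fold a. nra.
Qed.

Theorem mainTheorem3 :
  is_series
    (fun n : nat => Binomial.C (2 * n)%nat n / ((INR n + 1) ^ 3 * 2 ^ (2 * n)%nat))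
    (8 - 8 * ln 2 - PI ^ 2 / 3 + 4 * (ln 2) ^ 2).
Proof.
  replace (8 - 8 * ln 2 - PI ^ 2 / 3 + 4 * (ln 2) ^ 2) with (F3 0).
  - apply (is_series_ext (PS_div_pow 3 cbin)); [| exact is_series_cbin_div_3].
    intros n.
    change (PS_div_pow 3 cbin n = Binomial.C (2 * n) n / ((INR n + 1) ^ 3 * 2 ^ (2 * n))).
    unfold PS_div_pow, cbin. pose proof (pos_INR n). pose proof (pow_lt 2 (2 * n)).
    field. split; lra.
  - pose proof Li2_half. unfold F3.
    replace ((1 + 0) / 2) with (/ 2) by field. replace ((1 - 0) / 2) with (1 / 2) by field.
    rewrite ln_Rinv by lra. lra.
Qed.
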